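(* Let $(D,\chi)$ be a shaped oriented link diagram with a flattening $\mathfrak f$, and let $c$ be a non-pinched crossing of $D$. If $\mathfrak f'$ is the flattening that agrees with $\mathfrak f$ except that the parameter $\kappa$ at $c$ is replaced by $\kappa+k$ for some $k\in\mathbb Z$, then $\mathcal V(c,\mathfrak f')=\mathcal V(c,\mathfrak f)$ in $\mathbb C/2\pi^2 i\mathbb Z$. That is, the volume of a crossing does not depend on the choice of $\kappa$.
   Context: Oriented link diagram $D$; segments are edges of its underlying $4$-valent planar graph, regions are components of the complement. At each crossing, rotate so both strands point right; label incoming upper-left segment $1$, incoming lower-left segment $2$, outgoing lower-right segment $1'$ (continuation of $1$), outgoing upper-right segment $2'$ (continuation of $2$); regions $N$ (top), $S$ (bottom), $W$ (left, between $1$ and $2$), $E$ (right, between $2'$ and $1'$); $\epsilon=\pm1$ is the crossing sign. A shaping assigns $\chi_i=(a_i,b_i,m_i)\in(\mathbb C^\times)^3$ to segments satisfying, at each crossing, $m_{1'}=m_1,m_{2'}=m_2$ and (positive crossing) $A=1-\frac{m_1b_1}{b_2}(1-\frac{a_1}{m_1})(1-\frac{1}{m_2a_2})$, $a_{1'}=a_1/A$, $a_{2'}=a_2A$, $b_{1'}=\frac{m_2b_2}{m_1}(1-m_2a_2(1-\frac{b_2}{m_1b_1}))^{-1}$, $b_{2'}=b_1(1-\frac{m_1}{a_1}(1-\frac{b_2}{m_1b_1}))$, or (negative crossing) $\tilde A=1-\frac{b_2}{m_1b_1}(1-m_1a_1)(1-\frac{m_2}{a_2})$, $a_{1'}=a_1/\tilde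 A$, $a_{2'}=a_2\tilde A$, $b_{1'}=\frac{m_2b_2}{m_1}(1-\frac{a_2}{m_2}(1-\frac{m_1b_1}{b_2}))$, $b_{2'}=b_1(1-\frac{1}{m_1a_1}(1-\frac{m_1b_1}{b_2}))^{-1}$, all values finite and nonzero. A crossing is pinched if $b_{2'}=b_1$. A flattening consists of $\mu_j$ per component ($e^{2\pi i\mu_j}=m_j$), $\beta_k$ per segment ($e^{2\pi i\beta_k}=b_k$), $\gamma_R$ per region ($e^{2\pi i(\gamma_{R'}-\gamma_R)}=a_k$ when $R'$, $R$ lie to the right, left of segment $k$), and at each non-pinched crossing $\kappa$ with $e^{2\pi i\kappa}=e^{2\pi i\gamma_N}/(1-(b_{2'}/b_1)^\epsilon)$. Lifted dilogarithm: for $w=e^{\zeta^0}\ne1$ with $e^{\zeta^1}(1-w)=1$, $p^0=(\zeta^0-\operatorname{Log}w)/2\pi i$, $p^1=(\zeta^1+\operatorname{Log}(1-w))/2\pi i$, $\mathcal L(\zeta^0,\zeta^1)=\operatorname{Li}_2(w)+\frac12\operatorname{Log}w\operatorname{Log}(1-w)-\frac{\pi^2}6+\pi i(p^0\operatorname{Log}(1-w)+p^1\operatorname{Log}w)\in\mathbb C/2\pi^2\mathbb Z$ (principal Log; continuous extension understood). At a non-pinched crossing: $\zeta_N^0=2\pi i\epsilon(\beta_{2'}-\beta_1)$, $\zeta_N^1=2\pi i(\kappa-\gamma_N)$; $\zeta_W^0=2\pi i\epsilon(\beta_2-\beta_1-\mu_1)$, $\zeta_W^1=2\pi i(\kappa-\gamma_W+\epsilon\mu_1)$;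 $\zeta_S^0=2\pi i\epsilon(\beta_2-\beta_{1'}+\mu_2-\mu_1)$, $\zeta_S^1=2\pi i(\kappa-\gamma_S+\epsilon(\mu_1-\mu_2))$; $\zeta_E^0=2\pi i\epsilon(\beta_{2'}-\beta_{1'}+\mu_2)$, $\zeta_E^1=2\pi i(\kappa-\gamma_E-\epsilon\mu_2)$, and $\mathcal V(c,\mathfrak f)=-i\epsilon[\mathcal L(\zeta_N^0,\zeta_N^1)-\mathcal L(\zeta_W^0,\zeta_W^1)+\mathcal L(\zeta_S^0,\zeta_S^1)-\mathcal L(\zeta_E^0,\zeta_E^1)]\in\mathbb C/2\pi^2 i\mathbb Z$. *)

From Stdlib Require Import Reals ZArith.
From Coquelicot Require Import Coquelicot.
Open Scope R_scope.

Definition cexp (z : C) : C :=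
  (exp (fst z) * cos (snd z), exp (fst z) * sin (snd z)).

(* principal argument in (-PI, PI]; arg 0 := 0 *)
Definition carg (w : C) : R :=
  let x := fst w in let y := snd w in
  if Rlt_dec 0 x then atan (y / x)
  else if Rlt_dec x 0 then
    (if Rle_dec 0 y then atan (y / x) + PI else atan (y / x) - PI)
  else if Rlt_dec 0 y then PI / 2
  else if Rlt_dec y 0 then - (PI / 2)
  else 0.

(* principal logarithm Log w = ln|w| + i Arg w (junk value at w = 0) *)
Definition clog (w : C) : C := (ln (Cmod w), carg w).

Fixpoint cpow (z : C) (n : nat) : C :=
  match n with O => RtoC 1 | S n => Cmult z (cpow z n) end.

Definition Li2_disk (z : C) : C :=
  (Series (fun n => fst (cpow z (S n)) / (INR (S n))^2),
   Series (fun n => snd (cpow z (S n)) / (INR (S n))^2)).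

(* Principal branch of the dilogarithm, Li2(z) = - int_0^z Log(1-t)/t dt,
   extended outside the unit disk by the inversion formula
   Li2(z) = -pi^2/6 - 1/2 Log(-z)^2 - Li2(1/z)   (|z| > 1). *)
Definition Li2 (z : C) : C :=
  if Rle_dec (Cmod z) 1 then Li2_disk z
  else Cminus (Cminus (RtoC (- (PI ^ 2) / 6))
                      (Cmult (RtoC (1/2)) (Cmult (clog (Copp z)) (clog (Copp z)))))
              (Li2_disk (Cinv z)).

Definition twopii : C := Cmult (RtoC (2 * PI)) Ci.

(* Lifted dilogarithm L(zeta0, zeta1), a representative in C of a class in C/2pi^2 Z *)
Definition Lhat (z0 z1 : C) : C :=
  let w := cexp z0 in
  let p0 := Cdiv (Cminus z0 (clog w)) twopii in
  let p1 := Cdiv (Cplus z1 (clog (Cminus (RtoC 1) w))) twopii in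
  Cplus (Cminus (Cplus (Li2 w)
                  (Cmult (RtoC (1/2)) (Cmult (clog w) (clog (Cminus (RtoC 1) w)))))
                (RtoC (PI ^ 2 / 6)))
        (Cmult (Cmult (RtoC PI) Ci)
               (Cplus (Cmult p0 (clog (Cminus (RtoC 1) w)))
                      (Cmult p1 (clog w)))).

Definition cong_mod (p x y : C) : Prop := exists n : Z, Cminus x y = Cmult (RtoC (IZR n)) p.

Record diagram := {
  seg : Type;                 (* segments = edges of the 4-valent graph *)
  reg : Type;
  cross : Type;
  component : Type;
  seg_comp : seg -> component;
  seg_left : seg -> reg;
  seg_right : seg -> reg;
  positive : cross -> bool;   (* sign of the crossing: true = +1 *)
  in1 : cross -> seg;  in2 : cross -> seg;
  out1 : cross -> seg; out2 : cross -> seg;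
  rN : cross -> reg; rW : cross -> reg; rS : cross -> reg; rE : cross -> reg;
  comp_out1 : forall c, seg_comp (out1 c) = seg_comp (in1 c);
  comp_out2 : forall c, seg_comp (out2 c) = seg_comp (in2 c);
  left_in1 : forall c, seg_left (in1 c) = rN c;
  right_in1 : forall c, seg_right (in1 c) = rW c;
  left_in2 : forall c, seg_left (in2 c) = rW c;
  right_in2 : forall c, seg_right (in2 c) = rS c;
  left_out1 : forall c, seg_left (out1 c) = rE c;
  right_out1 : forall c, seg_right (out1 c) = rS c;
  left_out2 : forall c, seg_left (out2 c) = rN c;
  right_out2 : forall c, seg_right (out2 c) = rE c
}.

Definition eps (D : diagram) (c : cross D) : C :=
  RtoC (if positive D c then 1 else -1).

Definition C1 : C := RtoC 1.

Definition shaping_at (D : diagram) (a b m : seg D -> C) (c : cross D) : Prop :=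
  let a1 := a (in1 D c) in let b1 := b (in1 D c) in let m1 := m (in1 D c) in
  let a2 := a (in2 D c) in let b2 := b (in2 D c) in let m2 := m (in2 D c) in
  m (out1 D c) = m1 /\ m (out2 D c) = m2 /\
  if positive D c then
    let A := Cminus C1 (Cmult (Cdiv (Cmult m1 b1) b2)
               (Cmult (Cminus C1 (Cdiv a1 m1)) (Cminus C1 (Cinv (Cmult m2 a2))))) in
    let Dn := Cminus C1 (Cmult (Cmult m2 a2) (Cminus C1 (Cdiv b2 (Cmult m1 b1)))) in
    A <> RtoC 0 /\ Dn <> RtoC 0 /\
    a (out1 D c) = Cdiv a1 A /\ a (out2 D c) = Cmult a2 A /\
    b (out1 D c) = Cmult (Cdiv (Cmult m2 b2) m1) (Cinv Dn) /\
    b (out2 D c) = Cmult b1 (Cminus C1 (Cmult (Cdiv m1 a1) (Cminus C1 (Cdiv b2 (Cmult m1 b1)))))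
  else
    let At := Cminus C1 (Cmult (Cdiv b2 (Cmult m1 b1))
               (Cmult (Cminus C1 (Cmult m1 a1)) (Cminus C1 (Cdiv m2 a2)))) in
    let Dn := Cminus C1 (Cmult (Cinv (Cmult m1 a1)) (Cminus C1 (Cdiv (Cmult m1 b1) b2))) in
    At <> RtoC 0 /\ Dn <> RtoC 0 /\
    a (out1 D c) = Cdiv a1 At /\ a (out2 D c) = Cmult a2 At /\
    b (out1 D c) = Cmult (Cdiv (Cmult m2 b2) m1)
                     (Cminus C1 (Cmult (Cdiv a2 m2) (Cminus C1 (Cdiv (Cmult m1 b1) b2)))) /\
    b (out2 D c) = Cmult b1 (Cinv Dn).

(* a shaping: all values finite (automatic) and nonzero, crossing relations *)
Definition is_shaping (D : diagram) (a b m : seg D -> C) : Prop :=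
  (forall s, a s <> RtoC 0 /\ b s <> RtoC 0 /\ m s <> RtoC 0) /\
  (forall c, shaping_at D a b m c).

Definition pinched (D : diagram) (b : seg D -> C) (c : cross D) : Prop :=
  b (out2 D c) = b (in1 D c).

Definition pow_eps (D : diagram) (c : cross D) (x : C) : C :=
  if positive D c then x else Cinv x.

Definition is_flattening (D : diagram) (a b m : seg D -> C)
  (mu : component D -> C) (beta : seg D -> C) (gamma : reg D -> C) (kappa : cross D -> C) : Prop :=
  (forall s, cexp (Cmult twopii (mu (seg_comp D s))) = m s) /\
  (forall s, cexp (Cmult twopii (beta s)) = b s) /\
  (forall s, cexp (Cmult twopii (Cminus (gamma (seg_right D s)) (gamma (seg_left D s)))) = a s) /\
  (forall c, ~ pinched D b c ->
     cexp (Cmult twopii (kappa c)) =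
     Cdiv (cexp (Cmult twopii (gamma (rN D c))))
          (Cminus C1 (pow_eps D c (Cdiv (b (out2 D c)) (b (in1 D c)))))).

Definition crossing_volume (D : diagram)
  (mu : component D -> C) (beta : seg D -> C) (gamma : reg D -> C) (kappa : cross D -> C)
  (c : cross D) : C :=
  let e := eps D c in
  let mu1 := mu (seg_comp D (in1 D c)) in let mu2 := mu (seg_comp D (in2 D c)) in
  let b1 := beta (in1 D c) in let b2 := beta (in2 D c) in
  let b1' := beta (out1 D c) in let b2' := beta (out2 D c) in
  let k := kappa c in
  let zN0 := Cmult twopii (Cmult e (Cminus b2' b1)) in
  let zN1 := Cmult twopii (Cminus k (gamma (rN D c))) in
  let zW0 := Cmult twopii (Cmult e (Cminus (Cminus b2 b1) mu1)) in
  let zW1 := Cmult twopii (Cplus (Cminus k (gamma (rW D c))) (Cmult e mu1)) in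
  let zS0 := Cmult twopii (Cmult e (Cminus (Cplus (Cminus b2 b1') mu2) mu1)) in
  let zS1 := Cmult twopii (Cplus (Cminus k (gamma (rS D c))) (Cmult e (Cminus mu1 mu2))) in
  let zE0 := Cmult twopii (Cmult e (Cplus (Cminus b2' b1') mu2)) in
  let zE1 := Cmult twopii (Cminus (Cminus k (gamma (rE D c))) (Cmult e mu2)) in
  Cmult (Copp (Cmult Ci e))
    (Cminus (Cplus (Cminus (Lhat zN0 zN1) (Lhat zW0 zW1)) (Lhat zS0 zS1)) (Lhat zE0 zE1)).

Definition two_pi2_i : C := Cmult (RtoC (2 * PI ^ 2)) Ci.

From Pilot Require Import Defs.
From Stdlib Require Import Reals ZArith Lra.
From Coquelicot Require Import Coquelicot.
Open Scope R_scope.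

(* Shifting kappa by k shifts every second argument zeta^1 by 2 pi i k, which
   shifts the lifted dilogarithm L(zeta^0, zeta^1) by pi i k Log(e^zeta^0).
   Since Log(e^zeta^0) = zeta^0 + 2 pi i n, this is pi i k zeta^0 modulo
   2 pi^2 Z.  The four zeta^0 of a crossing have alternating sum 0, so the
   shifts cancel in V(c) up to -i eps 2 pi^2 Z = 2 pi^2 i Z. *)

Lemma carg_polar (u v : R) : (u <> 0 \/ v <> 0) ->
  cos (carg (u, v)) * Cmod (u, v) = u /\ sin (carg (u, v)) * Cmod (u, v) = v.
Proof.
  intros Hnz. unfold carg, Cmod; cbn [fst snd].
  set (t := v / u).
  assert (Hs : 0 < sqrt (1 + t²)) by (apply sqrt_lt_R0; pose proof (Rle_0_sqr t); lra).
  assert (Hmod : u <> 0 -> sqrt (u ^ 2 + v ^ 2) = Rabs u * sqrt (1 + t²)).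
  { intros Hu. rewrite <- sqrt_Rsqr_abs, <- sqrt_mult_alt by apply Rle_0_sqr.
    f_equal. unfold t, Rsqr. field. exact Hu. }
  destruct (Rlt_dec 0 u) as [Hu|Hu].
  { rewrite Hmod, Rabs_right, cos_atan, sin_atan by lra.
    split; unfold t in *; field; repeat split; lra. }
  destruct (Rlt_dec u 0) as [Hu'|Hu'].
  { rewrite Hmod, Rabs_left by lra.
    destruct (Rle_dec 0 v).
    - rewrite cos_plus, sin_plus, cos_PI, sin_PI, cos_atan, sin_atan.
      split; unfold t in *; field; repeat split; lra.
    - unfold Rminus.
      rewrite cos_plus, sin_plus, cos_neg, sin_neg, cos_PI, sin_PI, cos_atan, sin_atan.
      split; unfold t in *; field; repeat split; lra. }
  assert (u = 0) by lra. subst u.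
  replace (0 ^ 2 + v ^ 2) with (v²) by (unfold Rsqr; ring).
  rewrite sqrt_Rsqr_abs.
  destruct (Rlt_dec 0 v).
  { rewrite cos_PI2, sin_PI2, Rabs_right by lra. lra. }
  destruct (Rlt_dec v 0).
  { rewrite cos_neg, sin_neg, cos_PI2, sin_PI2, Rabs_left by lra. lra. }
  lra.
Qed.

Lemma cos_sin_eq_2PI (x y : R) :
  cos x = cos y -> sin x = sin y -> exists n : Z, x = y + 2 * PI * IZR n.
Proof.
  intros Hc Hs.
  assert (Hcos : cos (2 * ((x - y) / 2)) = 1).
  { replace (2 * ((x - y) / 2)) with (x - y) by field.
    rewrite cos_minus, Hc, Hs. pose proof (sin2_cos2 y). unfold Rsqr in *. lra. }
  rewrite cos_2a_sin in Hcos.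
  assert (Hsin : sin ((x - y) / 2) = 0) by nra.
  destruct (sin_eq_0_0 _ Hsin) as [n Hn]. exists n. lra.
Qed.

Lemma clog_cexp (z : C) : exists n : Z, clog (cexp z) = (z + twopii * IZR n)%C.
Proof.
  destruct z as [x y]. unfold clog, cexp; cbn [fst snd].
  set (r := exp x). assert (Hr : 0 < r) by apply exp_pos.
  assert (Hmod : Cmod (r * cos y, r * sin y) = r).
  { unfold Cmod; cbn [fst snd].
    replace ((r * cos y) ^ 2 + (r * sin y) ^ 2) with (r²)
      by (pose proof (sin2_cos2 y); unfold Rsqr in *; nra).
    rewrite sqrt_Rsqr_abs, Rabs_right; lra. }
  assert (Hnz : r * cos y <> 0 \/ r * sin y <> 0).
  { pose proof (sin2_cos2 y). unfold Rsqr in *.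
    destruct (Req_dec (cos y) 0) as [Hc|Hc]; [right|left]; intro H0;
      destruct (Rmult_integral _ _ H0); nra. }
  destruct (carg_polar _ _ Hnz) as [Hc Hs]. rewrite Hmod in Hc, Hs.
  destruct (cos_sin_eq_2PI (carg (r * cos y, r * sin y)) y) as [n Hn].
  { apply (Rmult_eq_reg_r r); lra. }
  { apply (Rmult_eq_reg_r r); lra. }
  exists n. rewrite Hmod, Hn. unfold r; rewrite ln_exp.
  unfold twopii, Cplus, Cmult, RtoC, Ci; cbn.
  apply injective_projections; cbn; ring.
Qed.

Lemma twopii_neq0 : twopii <> 0%C.
Proof.
  unfold twopii, Cmult, RtoC, Ci; cbn. intro H. injection H as H.
  pose proof PI_RGT_0. lra.
Qed.

Lemma Lhat_shift (z0 z1 : C) (k : Z) :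
  Lhat z0 (z1 + twopii * IZR k)%C = (Lhat z0 z1 + PI * Ci * (IZR k * clog (cexp z0)))%C.
Proof.
  unfold Lhat; cbv zeta. pose proof twopii_neq0. field. assumption.
Qed.

Lemma Lhat_shift_mod (z0 z1 : C) (k : Z) : exists n : Z,
  Lhat z0 (z1 + twopii * IZR k)%C
  = (Lhat z0 z1 + PI * Ci * IZR k * z0 + RtoC (2 * PI ^ 2) * IZR n)%C.
Proof.
  destruct (clog_cexp z0) as [n Hn]. exists (- (k * n))%Z.
  rewrite Lhat_shift, Hn, <- Cplus_assoc. f_equal.
  rewrite opp_IZR, mult_IZR.
  unfold twopii, Cplus, Cmult, RtoC, Ci.
  apply injective_projections; cbn; ring.
Qed.

Definition Lhat_alternating (e zN0 zN1 zW0 zW1 zS0 zS1 zE0 zE1 : C) : C :=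
  (- (Ci * e) * (Lhat zN0 zN1 - Lhat zW0 zW1 + Lhat zS0 zS1 - Lhat zE0 zE1))%C.

Lemma Lhat_alternating_shift (e zN0 zN1 zW0 zW1 zS0 zS1 zE0 zE1 zN1' zW1' zS1' zE1' : C)
  (k : Z) :
  e = RtoC 1 \/ e = RtoC (-1) ->
  zE0 = (zN0 - zW0 + zS0)%C ->
  zN1' = (zN1 + twopii * IZR k)%C -> zW1' = (zW1 + twopii * IZR k)%C ->
  zS1' = (zS1 + twopii * IZR k)%C -> zE1' = (zE1 + twopii * IZR k)%C ->
  cong_mod two_pi2_i (Lhat_alternating e zN0 zN1' zW0 zW1' zS0 zS1' zE0 zE1')
                     (Lhat_alternating e zN0 zN1 zW0 zW1 zS0 zS1 zE0 zE1).
Proof.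
  intros He HzE0 -> -> -> ->.
  destruct (Lhat_shift_mod zN0 zN1 k) as [nN HN].
  destruct (Lhat_shift_mod zW0 zW1 k) as [nW HW].
  destruct (Lhat_shift_mod zS0 zS1 k) as [nS HS].
  destruct (Lhat_shift_mod zE0 zE1 k) as [nE HE].
  set (n := (nN - nW + nS - nE)%Z).
  assert (Hdiff : (Lhat_alternating e zN0 (zN1 + twopii * IZR k) zW0 (zW1 + twopii * IZR k)
                     zS0 (zS1 + twopii * IZR k) zE0 (zE1 + twopii * IZR k)
                   - Lhat_alternating e zN0 zN1 zW0 zW1 zS0 zS1 zE0 zE1)%C
                  = (- (Ci * e) * (RtoC (2 * PI ^ 2) * IZR n))%C).
  { unfold Lhat_alternating, n. rewrite HN, HW, HS, HE, HzE0.
    rewrite ?minus_IZR, ?plus_IZR, ?minus_IZR, ?RtoC_minus, ?RtoC_plus, ?RtoC_minus.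
    ring. }
  unfold cong_mod. rewrite Hdiff.
  destruct He as [-> | ->]; [exists (- n)%Z | exists n];
    rewrite ?opp_IZR; unfold two_pi2_i, Cmult, Copp, RtoC, Ci;
    apply injective_projections; cbn; ring.
Qed.

Theorem lemma3p4 (D : diagram) (a b m : seg D -> C)
  (mu : component D -> C) (beta : seg D -> C) (gamma : reg D -> C)
  (kappa kappa' : cross D -> C) (c : cross D) (k : Z) :
  is_shaping D a b m ->
  is_flattening D a b m mu beta gamma kappa ->
  is_flattening D a b m mu beta gamma kappa' ->
  ~ pinched D b c ->
  kappa' c = Cplus (kappa c) (RtoC (IZR k)) ->
  (forall c', c' <> c -> kappa' c' = kappa c') ->
  cong_mod two_pi2_i (crossing_volume D mu beta gamma kappa' c)
                     (crossing_volume D mu beta gamma kappa c).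
Proof.
  intros _ _ _ _ Hk _.
  unfold crossing_volume; cbv zeta. rewrite Hk.
  apply (Lhat_alternating_shift _ _ _ _ _ _ _ _ _ _ _ _ _ k); [| ring ..].
  unfold eps. destruct (Defs.positive D c); [left | right]; reflexivity.
Qed.
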